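(* For every $q\in X^*\setminus\{e\}$, the set of $\omega$-words $\xi\in X^\omega$ that are quasiperiodic with quasiperiod $q$ equals $P_q^\omega$.
   Context: $X$ is a finite alphabet with $|X|\ge 2$; $X^*$ the finite words (empty word $e$), $X^\omega$ the infinite words. $w\sqsubseteq\eta$ means $w$ is a prefix of $\eta$, $w\sqsubset\eta$ a proper prefix. For a language $L$, $L^\omega:=\{w_1w_2\cdots : w_i\in L\setminus\{e\}\}$. An $\omega$-word $\xi$ is quasiperiodic with quasiperiod $q$ if for every $j\in\mathbb{N}$ there is a prefix $u_j\sqsubseteq\xi$ with $j-|q|<|u_j|\le j$ and $u_j\cdot q\sqsubseteq\xi$. $P_q:=\{v: e\sqsubset v\sqsubseteq q\sqsubset v\cdot q\}$. *)

From mathcomp Require Import all_boot.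
Set Implicit Arguments. Unset Strict Implicit. Unset Printing Implicit Defensive.

Definition wprefix (X : finType) (w : seq X) (xi : nat -> X) : Prop :=
  w = mkseq xi (size w).

Definition pprefix (X : finType) (v w : seq X) : bool :=
  prefix v w && (v != w).

Definition quasiperiodic (X : finType) (xi : nat -> X) (q : seq X) : Prop :=
  forall j : nat, exists u : seq X,
    wprefix u xi /\ j < size u + size q /\ size u <= j /\ wprefix (u ++ q) xi.

Definition Pq (X : finType) (q : seq X) (v : seq X) : Prop :=
  pprefix [::] v /\ prefix v q /\ pprefix q (v ++ q).

Definition omega_power (X : finType) (L : seq X -> Prop) (xi : nat -> X) : Prop :=
  exists w : nat -> seq X,
    (forall i, L (w i) /\ w i <> [::]) /\
    (forall n, wprefix (flatten [seq w i | i <- iota 0 n]) xi).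

From mathcomp Require Import all_boot.

Set Implicit Arguments. Unset Strict Implicit. Unset Printing Implicit Defensive.

(* Both sides say that the starting positions of occurrences of q in xi can be
   enumerated as 0 = p_0 < p_1 < p_2 < ... with p_(n+1) <= p_n + |q|.
   Quasiperiodicity gives such a chain by repeatedly choosing an occurrence in
   the window just after the previous one, and a chain is quasiperiodic since
   every position lies in some interval [p_n, p_(n+1)).  The blocks
   xi[p_n, p_(n+1)) lie in P_q because q occurs both at p_n and at p_(n+1);
   conversely, if xi = w_1 w_2 ... with w_i in P_q, then q ⊑ w_i q shows that q
   occurs at the end of every finite block product w_1 ... w_n. *)

Lemma prefix_catl_size (T : eqType) (s t u : seq T) :
  prefix s (t ++ u) -> size s <= size t -> prefix s t.
Proof. by rewrite !prefixE => st_s le_st; rewrite -(takel_cat u le_st). Qed.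

Lemma prefix_flatten_cat (T : eqType) (q : seq T) (ws : seq (seq T)) :
  all (fun w => prefix q (w ++ q)) ws -> prefix q (flatten ws ++ q).
Proof.
elim: ws => [|w ws IHws] /=; first by rewrite prefix_refl.
case/andP=> /prefixP[r def_wq] /IHws/prefixP[r' def_wsq].
by rewrite -catA def_wsq catA def_wq -catA prefix_prefix.
Qed.

Lemma size_flatten_ge (T : Type) (ws : seq (seq T)) :
  all (fun w => ~~ nilp w) ws -> size ws <= size (flatten ws).
Proof.
elim: ws => [|w ws IHws] //= /andP[w_nil /IHws le_ws].
by rewrite size_cat -add1n leq_add // lt0n -/(nilp w).
Qed.

Lemma increasing_bracket (f : nat -> nat) :
  f 0 = 0 -> (forall n, f n < f n.+1) -> forall j, exists n, f n <= j < f n.+1.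
Proof.
move=> f0 f_incr; elim=> [|j [n /andP[le_fj lt_jf]]].
  by exists 0; rewrite f0 (leq_ltn_trans (leq0n _) (f_incr 0)).
have [lt_j1f | le_fj1] := ltnP j.+1 (f n.+1).
  by exists n; rewrite lt_j1f (leq_trans le_fj).
exists n.+1; have -> : j.+1 = f n.+1 by apply/eqP; rewrite eqn_leq lt_jf.
by rewrite leqnn f_incr.
Qed.

Section Factors.
Variables (X : Type) (xi : nat -> X).

Definition factor (a n : nat) : seq X := mkseq (fun i => xi (a + i)) n.

Lemma size_factor a n : size (factor a n) = n.
Proof. exact: size_mkseq. Qed.

Lemma factorD a m n : factor a (m + n) = factor a m ++ factor (a + m) n.
Proof.
rewrite /factor /mkseq iotaD map_cat add0n -[m in iota m n]addn0 iotaDl.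
by rewrite -map_comp; congr (_ ++ _); apply: eq_map => i /=; rewrite addnA.
Qed.

Lemma flatten_factors (pos : nat -> nat) n :
  pos 0 = 0 -> (forall i, pos i <= pos i.+1) ->
  flatten [seq factor (pos i) (pos i.+1 - pos i) | i <- iota 0 n] = factor 0 (pos n).
Proof.
move=> pos0 pos_mono; elim: n => [|n IHn]; first by rewrite pos0.
rewrite -addn1 iotaD map_cat flatten_cat IHn /= cats0 addn1.
by rewrite -{1}[pos n]add0n -factorD add0n subnKC.
Qed.

End Factors.

Section Occurrences.
Variables (X : finType) (xi : nat -> X) (q : seq X).

Lemma wprefixE w : wprefix w xi = (w = factor xi 0 (size w)).
Proof. by []. Qed.

Lemma wprefix_factor n : wprefix (factor xi 0 n) xi.
Proof. by rewrite wprefixE size_factor. Qed.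

Lemma wprefix_prefix w w' : prefix w w' -> wprefix w' xi -> wprefix w xi.
Proof.
move=> w_w'; rewrite !wprefixE => def_w'; have le_ww' := size_prefix w_w'.
move: w_w'; rewrite def_w' -(subnKC le_ww') factorD => /prefix_catl_size.
rewrite size_factor => /(_ (leqnn _)).
by rewrite prefixE take_oversize ?size_factor // => /eqP/esym.
Qed.

Definition occurs_at (k : nat) : bool := factor xi k (size q) == q.

Lemma wprefix_occursE k : wprefix (factor xi 0 k ++ q) xi <-> occurs_at k.
Proof.
rewrite wprefixE size_cat size_factor factorD add0n /occurs_at.
by split=> [/eqP|/eqP-> //]; rewrite eqseq_cat // eqxx eq_sym.
Qed.

Lemma quasiperiodicE :
  quasiperiodic xi q <->
  forall j, exists k, [&& k <= j, j < k + size q & occurs_at k].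
Proof.
split=> qp j.
  have [u [def_u [lt_ju [le_uj]]]] := qp j.
  rewrite wprefixE in def_u; rewrite def_u => /wprefix_occursE occ.
  by exists (size u); rewrite le_uj lt_ju occ.
have [k /and3P[le_kj lt_jk /wprefix_occursE occ]] := qp j.
by exists (factor xi 0 k); rewrite size_factor; split; [exact: wprefix_factor|].
Qed.

Definition occurrence_chain (pos : nat -> nat) : Prop :=
  pos 0 = 0 /\ forall n, occurs_at (pos n) /\ pos n < pos n.+1 <= pos n + size q.

Lemma quasiperiodic_chain : quasiperiodic xi q -> exists pos, occurrence_chain pos.
Proof.
move/quasiperiodicE=> qp; pose next j := xchoose (qp j).
have nextP j : [&& next j <= j, j < next j + size q & occurs_at (next j)].
  exact: (xchooseP (qp j)).
pose pos n := iter n (fun p => next (p + size q)) 0.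
have occ0 : occurs_at 0.
  by case/and3P: (nextP 0); rewrite leqn0 => /eqP->.
exists pos; split=> // n; split.
  by case: n => [|n] //=; case/and3P: (nextP (pos n + size q)).
case/and3P: (nextP (pos n + size q)) => /= le_next lt_next _.
by rewrite -(ltn_add2r (size q)) lt_next le_next.
Qed.

Lemma chain_quasiperiodic pos : occurrence_chain pos -> quasiperiodic xi q.
Proof.
move=> [pos0 chain]; apply/quasiperiodicE => j.
have [|n /andP[le_pj lt_jp]] := increasing_bracket pos0 _ j.
  by move=> n; have [_ /andP[]] := chain n.
have [occ /andP[_ le_pq]] := chain n.
by exists (pos n); rewrite le_pj occ (leq_trans lt_jp).
Qed.

Lemma Pq_factor a b :
  occurs_at a -> occurs_at b -> a < b <= a + size q -> Pq q (factor xi a (b - a)).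
Proof.
move=> /eqP occ_a /eqP occ_b /andP[lt_ab le_bq].
have le_dq : b - a <= size q by rewrite leq_subLR.
have occ_b' : factor xi (a + (b - a)) (size q) = q by rewrite subnKC // ltnW.
split; first by rewrite /pprefix prefix0s eq_sym -size_eq0 size_factor subn_eq0 -ltnNge.
split.
  by rewrite -[in X in prefix _ X]occ_a -(subnKC le_dq) factorD prefix_prefix.
apply/andP; split.
  by rewrite -{2}occ_b' -factorD addnC factorD occ_a prefix_prefix.
apply/eqP=> /(congr1 size)/eqP; rewrite size_cat size_factor -{1}[size q]add0n.
by rewrite eqn_add2r eq_sym subn_eq0 leqNgt lt_ab.
Qed.

Lemma chain_omega_power pos : occurrence_chain pos -> omega_power (Pq q) xi.
Proof.
move=> [pos0 chain]; exists (fun n => factor xi (pos n) (pos n.+1 - pos n)); split.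
  move=> n; have [occ lt_pos] := chain n; have [occ1 _] := chain n.+1.
  split; first exact: Pq_factor occ occ1 lt_pos.
  move/(congr1 size)/eqP; rewrite size_factor subn_eq0 leqNgt.
  by case/andP: lt_pos => ->.
have pos_mono i : pos i <= pos i.+1 by have [_ /andP[/ltnW]] := chain i.
by move=> n; rewrite (flatten_factors _ _ pos0 pos_mono); apply: wprefix_factor.
Qed.

Lemma omega_power_chain : omega_power (Pq q) xi -> exists pos, occurrence_chain pos.
Proof.
move=> [w [Pw prefix_xi]].
pose W n := flatten [seq w i | i <- iota 0 n].
have W_add n k : W (n + k) = W n ++ flatten [seq w i | i <- iota n k].
  by rewrite /W iotaD map_cat flatten_cat.
have w_gt0 i : 0 < size (w i) by case: (Pw i) => _ /eqP; rewrite lt0n size_eq0.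
have w_leq i : size (w i) <= size q by case: (Pw i) => [[_ [/size_prefix]]].
exists (fun n => size (W n)); split; first by []; move=> n; split.
  apply/wprefix_occursE; have := prefix_xi n; rewrite wprefixE -/(W n) => <-.
  apply: wprefix_prefix (prefix_xi (n + size q)); rewrite -/(W _) W_add.
  apply: (@prefix_catl_size _ _ _ q).
    rewrite -catA prefix_catr // eqxx /=; apply: prefix_flatten_cat.
    by rewrite all_map; apply/allP=> i _; case: (Pw i) => [[_ [_ /andP[]]]].
  rewrite !size_cat leq_add2l; apply: leq_trans (size_flatten_ge _).
    by rewrite size_map size_iota.
  by rewrite all_map; apply/allP=> i _; rewrite /= /nilp -lt0n w_gt0.
rewrite -[n.+1]addn1 W_add /= cats0 size_cat leq_add2l w_leq andbT.
by rewrite -{1}[size (W n)]addn0 ltn_add2l w_gt0.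
Qed.

End Occurrences.

Theorem mainTheorem5 (X : finType) (hX : 1 < #|X|) (q : seq X) (hq : q != [::]) :
  forall xi : nat -> X, quasiperiodic xi q <-> omega_power (Pq q) xi.
Proof.
move=> xi; split.
  by case/quasiperiodic_chain=> pos; apply: chain_omega_power.
by case/omega_power_chain=> pos; apply: chain_quasiperiodic.
Qed.
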